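(* Let $E$ be a directed graph and $G(E)$ its graph inverse semigroup. The following are equivalent: (1) the semigroup operation of $G(E)$ is jointly continuous with respect to the topology $\tau_c$; (2) for each non-zero $uv^{-1}\in G(E)$ the set $M_{uv^{-1}}=\{(ab^{-1},cd^{-1})\in G(E)\times G(E)\mid ab^{-1}\cdot cd^{-1}=uv^{-1}\}$ is finite; (3) for each vertex $e\in E^0$ the set $I_e=\{u\in\operatorname{Path}(E)\mid r(u)=e\}$ is finite; (4) $G(E)$ contains neither a subsemigroup isomorphic to the bicyclic monoid nor a subsemigroup isomorphic to the semigroup $\mathcal{M}_\omega$ of $\omega\times\omega$-matrix units; (5) each $\mathcal{D}$-class of $G(E)$ is finite.
   Context: A directed graph $E=(E^0,E^1,r,s)$ consists of disjoint sets $E^0$ (vertices), $E^1$ (edges) and maps $s,r:E^1\to E^0$. Paths: vertices (length zero) and finite sequences of edges $e_1\ldots e_n$ with $r(e_i)=s(e_{i+1})$; $\operatorname{Path}(E)$ is the set of all paths, with $s(e_1\ldots e_n)=s(e_1)$, $r(e_1\ldots e_n)=r(e_n)$, $s(v)=r(v)=v$ for vertices. The graph inverse semigroup $G(E)$ is the semigroup with zero $0$ generated by $E^0$, $E^1$, and $E^{-1}=\{e^{-1}\mid e\in E^1\}$ subject to: for $a,b\in E^0$, $e,f\in E^1$: $ab=a$ if $a=b$, else $0$; $s(e)e=er(e)=e$; $e^{-1}s(e)=r(e)e^{-1}=e^{-1}$; $e^{-1}f=r(e)$ if $e=f$, else $0$. Every non-zero element is uniquely $uv^{-1}$ with $u,v\in\operatorname{Path}(E)$,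 $r(u)=r(v)$, with product $u_1v_1^{-1}\cdot u_2v_2^{-1}=u_1wv_2^{-1}$ if $u_2=v_1w$, $=u_1(v_2w)^{-1}$ if $v_1=u_2w$ (for a path $w$), and $0$ otherwise. The topology $\tau_c$ on $G(E)$: every non-zero element is isolated, and the open neighborhoods of $0$ are exactly the cofinite subsets of $G(E)$ containing $0$. The bicyclic monoid is the monoid generated by $p,q$ subject to $pq=1$. For a set $X$, $\mathcal{M}_X=(X\times X)\cup\{0\}$ with $(a,b)(c,d)=(a,d)$ if $b=c$, $0$ otherwise, and $0$ a zero. $\mathcal{D}$ denotes Green's $\mathcal{D}$-relation. *)

From Stdlib Require Import List ClassicalEpsilon Arith.
Import ListNotations.

Definition finite_set {T : Type} (P : T -> Prop) : Prop :=
  exists l : list T, forall x, P x -> In x l.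

Section GraphInverseSemigroup.
Context {V Ed : Type} (s r : Ed -> V).

(* A path is represented as (start vertex, list of edges); vertices are
   the paths (v, []). *)
Definition path : Type := (V * list Ed)%type.

Fixpoint chain (v : V) (l : list Ed) : Prop :=
  match l with
  | [] => True
  | e :: l' => s e = v /\ chain (r e) l'
  end.

Definition is_path (p : path) : Prop := chain (fst p) (snd p).

Fixpoint last_v (v : V) (l : list Ed) : V :=
  match l with
  | [] => v
  | e :: l' => last_v (r e) l'
  end.

Definition psrc (p : path) : V := fst p.
Definition prange (p : path) : V := last_v (fst p) (snd p).

(* concatenation of a path with a continuation w (a path starting at the
   range of p, given by its edge list; w = [] is the vertex r(p)) *)
Definition pcat (p : path) (w : list Ed) : path := (fst p, snd p ++ w).

(* non-zero elements u v^{-1} of G(E) *)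
Record GE : Type := mkGE {
  gu : path; gv : path;
  gu_path : is_path gu; gv_path : is_path gv;
  g_range : prange gu = prange gv }.

(* G(E) = non-zero elements plus the zero (None) *)
Definition GIS : Type := option GE.

Definition mul_rel (x y z : GE) : Prop :=
  (exists w, gu y = pcat (gv x) w /\ gu z = pcat (gu x) w /\ gv z = gv y) \/
  (exists w, gv x = pcat (gu y) w /\ gu z = gu x /\ gv z = pcat (gv y) w).

Definition gmul (a b : GIS) : GIS :=
  match a, b with
  | Some x, Some y =>
      match excluded_middle_informative (exists z, mul_rel x y z) with
      | left H => Some (proj1_sig (constructive_indefinite_description _ H))
      | right _ => None
      end
  | _, _ => None
  end.

(* topology tau_c: non-zero points isolated, neighbourhoods of 0 cofinite *)
Definition tc_open (U : GIS -> Prop) : Prop :=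
  U None -> finite_set (fun x => ~ U x).

Definition gmul_jointly_continuous : Prop :=
  forall (x y : GIS) (W : GIS -> Prop), tc_open W -> W (gmul x y) ->
    exists (U U' : GIS -> Prop), tc_open U /\ tc_open U' /\ U x /\ U' y /\
      forall a b, U a -> U' b -> W (gmul a b).

(* Green's relations on G(E) (using S^1) *)
Definition green_L (x y : GIS) : Prop :=
  (x = y \/ exists t, x = gmul t y) /\ (y = x \/ exists t, y = gmul t x).
Definition green_R (x y : GIS) : Prop :=
  (x = y \/ exists t, x = gmul y t) /\ (y = x \/ exists t, y = gmul x t).
Definition green_D (x y : GIS) : Prop :=
  exists z, green_L x z /\ green_R z y.

End GraphInverseSemigroup.

(* The bicyclic monoid, realised as nat*nat with (a,b) ~ q^a p^b :
   q^a p^b . q^c p^d = q^(a+c-min(b,c)) p^(b+d-min(b,c)). *)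
Definition bicyclic_mul (x y : nat * nat) : nat * nat :=
  (fst x + fst y - Nat.min (snd x) (fst y),
   snd x + snd y - Nat.min (snd x) (fst y)).

(* The semigroup M_omega of omega x omega matrix units; None is 0. *)
Definition Momega_mul (x y : option (nat * nat)) : option (nat * nat) :=
  match x, y with
  | Some (a, b), Some (c, d) => if Nat.eqb b c then Some (a, d) else None
  | _, _ => None
  end.

(* T contains a subsemigroup isomorphic to (S, mulS): an injective
   semigroup homomorphism S -> T (its image is such a subsemigroup). *)
Definition embeds {S T : Type} (mulS : S -> S -> S) (mulT : T -> T -> T) : Prop :=
  exists f : S -> T, (forall a b, f a = f b -> a = b) /\
    (forall a b, f (mulS a b) = mulT (f a) (f b)).

(* Everything is controlled by the sets I_e of paths ending at e ([paths_into e]).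
   The vertex e factors as (e u^{-1}) (u e^{-1}) for every u in I_e, so finite
   preimages, and already continuity of the product at (0, 0), force every I_e to
   be finite. Conversely, if x y = z then one factor has a prefix of a path of z
   as one of its paths and a path of I_e as the other, and it determines the
   other factor; likewise a D-class consists of elements u v^{-1} with u, v in a
   single I_e. An infinite I_e comes either from a cycle c, whose powers
   c^a (c^b)^{-1} form a bicyclic monoid, or, in an acyclic graph, from pairwise
   prefix-incomparable paths u_i into e, whose u_i u_j^{-1} are matrix units;
   both contain infinite D-classes. *)

From Stdlib Require Import List Arith Lia Classical ClassicalEpsilon ProofIrrelevance FinFun.
Import ListNotations.

Lemma finite_set_sub {A} (P Q : A -> Prop) :
  finite_set Q -> (forall x, P x -> Q x) -> finite_set P.
Proof. intros [l Hl] H. exists l. auto. Qed.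

Lemma finite_set_or {A} (P Q : A -> Prop) :
  finite_set P -> finite_set Q -> finite_set (fun x => P x \/ Q x).
Proof.
  intros [l Hl] [m Hm]. exists (l ++ m).
  intros x [Hx|Hx]; apply in_or_app; auto.
Qed.

Lemma finite_set_image {A B} (Q : B -> Prop) (g : B -> A) :
  finite_set Q -> finite_set (fun x => exists y, Q y /\ x = g y).
Proof. intros [l Hl]. exists (map g l). intros x (y & Hy & ->). apply in_map, Hl, Hy. Qed.

Lemma finite_set_inj {A B} (P : A -> Prop) (Q : B -> Prop) (f : A -> B) :
  finite_set Q -> (forall x, P x -> Q (f x)) ->
  (forall x y, P x -> P y -> f x = f y -> x = y) -> finite_set P.
Proof.
  intros HQ Hf Hinj.
  destruct (classic (exists x0, P x0)) as [[x0 _]|Hempty].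
  2: { exists []. intros x Px. exact (Hempty (ex_intro _ x Px)). }
  set (g b := epsilon (inhabits x0) (fun x => P x /\ f x = b)).
  apply (finite_set_sub _ _ (finite_set_image Q g HQ)).
  intros x Px. exists (f x). split; [auto|].
  destruct (epsilon_spec (inhabits x0) (fun y => P y /\ f y = f x)
              (ex_intro _ x (conj Px eq_refl))) as [Py Hfy].
  symmetry. auto.
Qed.

Lemma finite_set_Some {A} (Q : option A -> Prop) :
  finite_set Q -> finite_set (fun x => Q (Some x)).
Proof.
  intros HQ. apply (finite_set_inj _ Q Some HQ); auto.
  intros x y _ _ [= ->]. reflexivity.
Qed.

Lemma finite_set_sigma {A B} (P : A -> Prop) (Q : A -> B -> Prop) :
  finite_set P -> (forall a, P a -> finite_set (Q a)) ->
  finite_set (fun ab : A * B => P (fst ab) /\ Q (fst ab) (snd ab)).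
Proof.
  intros [l Hl] HQ.
  assert (Hfib : forall a, exists m, forall b, P a /\ Q a b -> In b m).
  { intros a. destruct (classic (P a)) as [Pa|nPa].
    - destruct (HQ a Pa) as [m Hm]. exists m. intros b [_ Hb]. auto.
    - exists []. intros b [Pa _]. contradiction. }
  destruct (choice _ Hfib) as [F HF].
  exists (flat_map (fun a => map (pair a) (F a)) l).
  intros [a b] H. apply in_flat_map. exists a. split.
  - apply Hl, H.
  - apply in_map, HF, H.
Qed.

Lemma finite_set_bigunion {I A} (J : I -> Prop) (P : I -> A -> Prop) :
  finite_set J -> (forall i, J i -> finite_set (P i)) ->
  finite_set (fun x => exists i, J i /\ P i x).
Proof.
  intros HJ HP.
  apply (finite_set_sub _ _ (finite_set_image _ snd (finite_set_sigma J P HJ HP))).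
  intros x (i & Hi & Hx). exists (i, x). auto.
Qed.

Lemma finite_set_list_prefixes {A} (l : list A) :
  finite_set (fun p => exists w, l = p ++ w).
Proof.
  induction l as [|a l [L HL]].
  - exists [[]]. intros [|b p] [w Hw]; [now left | discriminate].
  - exists ([] :: map (cons a) L). intros [|b p] [w Hw]; [now left|].
    right. injection Hw as -> Hw. apply in_map, HL. eauto.
Qed.

Lemma finite_set_no_injection {A} (P : A -> Prop) (g : nat -> A) :
  finite_set P -> (forall n, P (g n)) -> ~ Injective g.
Proof.
  intros [l Hl] Hg Hinj.
  assert (Hnd : NoDup (map g (seq 0 (S (length l))))).
  { apply Injective_map_NoDup; [exact Hinj | apply seq_NoDup]. }
  apply NoDup_incl_length with (l' := l) in Hnd.
  - rewrite length_map, length_seq in Hnd. lia.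
  - intros x Hx. apply in_map_iff in Hx. destruct Hx as (n & <- & _). auto.
Qed.

Lemma infinite_set_injection {A} (P : A -> Prop) :
  ~ finite_set P -> exists g : nat -> A, (forall n, P (g n)) /\ Injective g.
Proof.
  intros Hinf.
  assert (Hfresh : forall l : list A, exists x, P x /\ ~ In x l).
  { intros l. apply NNPP. intros Hno. apply Hinf. exists l. intros x Px.
    apply NNPP. intros Hx. apply Hno. eauto. }
  destruct (choice _ Hfresh) as [h Hh].
  set (L := fix L n := match n with 0 => [] | S n => h (L n) :: L n end).
  exists (fun n => h (L n)). split; [intros n; apply Hh|].
  assert (Hin : forall m n, m < n -> In (h (L m)) (L n)).
  { intros m n; induction n as [|n IH]; intros Hmn; [lia|]. simpl.
    destruct (Nat.eq_dec m n) as [->|]; [now left | right; apply IH; lia]. }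
  intros n m E. destruct (Nat.lt_trichotomy n m) as [C|[C|C]]; auto; exfalso.
  - apply (proj2 (Hh (L m))). rewrite <- E. auto.
  - apply (proj2 (Hh (L n))). rewrite E. auto.
Qed.

Fixpoint list_pow {A} (c : list A) (n : nat) : list A :=
  match n with 0 => [] | S n => c ++ list_pow c n end.

Lemma list_pow_add {A} (c : list A) n m : list_pow c (n + m) = list_pow c n ++ list_pow c m.
Proof. induction n as [|n IH]; simpl; [reflexivity|]. now rewrite IH, app_assoc. Qed.

Lemma length_list_pow {A} (c : list A) n : length (list_pow c n) = n * length c.
Proof. induction n as [|n IH]; simpl; [reflexivity|]. rewrite length_app, IH. lia. Qed.

Lemma list_pow_inj {A} (c : list A) : c <> [] -> Injective (list_pow c).
Proof.
  intros Hc n m E. apply (f_equal (@length A)) in E. rewrite !length_list_pow in E.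
  apply (Nat.mul_cancel_r _ _ (length c)); [destruct c; simpl; congruence | exact E].
Qed.

Section GraphInverseSemigroup.
Context {V Ed : Type} (s r : Ed -> V).

Notation path := (@path V Ed).
Notation chain := (chain s r).
Notation last_v := (last_v r).
Notation is_path := (is_path s r).
Notation prange := (prange r).
Notation GE := (GE s r).
Notation GIS := (GIS s r).
Notation mkGE := (mkGE s r).
Notation gu := (gu s r).
Notation gv := (gv s r).
Notation mul_rel := (mul_rel s r).
Notation gmul := (gmul s r).
Notation green_L := (green_L s r).
Notation green_R := (green_R s r).
Notation green_D := (green_D s r).

Definition prefix (p q : path) : Prop := exists w, q = pcat p w.

Definition paths_into (e : V) (u : path) : Prop := is_path u /\ prange u = e.

Lemma pcat_nil (p : path) : pcat p [] = p.
Proof. destruct p. unfold pcat. simpl. now rewrite app_nil_r. Qed.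

Lemma pcat_inj (p : path) w1 w2 : pcat p w1 = pcat p w2 -> w1 = w2.
Proof. unfold pcat. intros [= H]. exact (app_inv_head _ _ _ H). Qed.

Lemma pcat_antisym (p q : path) w1 w2 : p = pcat q w1 -> q = pcat p w2 -> w1 = [] /\ w2 = [].
Proof.
  destruct p as [a p], q as [b q]. unfold pcat. simpl. intros [= -> Hp] [= Hq]. subst q.
  rewrite <- app_assoc, <- (app_nil_r p) in Hp at 1. apply app_inv_head in Hp.
  symmetry in Hp. apply app_eq_nil in Hp. tauto.
Qed.

Lemma prefix_refl (p : path) : prefix p p.
Proof. exists []. symmetry. apply pcat_nil. Qed.

Lemma prefix_antisym (p q : path) : prefix p q -> prefix q p -> p = q.
Proof.
  intros [w1 Hq] [w2 Hp]. destruct (pcat_antisym _ _ _ _ Hp Hq) as [-> _].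
  rewrite Hp. apply pcat_nil.
Qed.

Lemma prefixes_finite (p : path) : finite_set (fun q => prefix q p).
Proof.
  apply (finite_set_sub _ _ (finite_set_image _ (pair (fst p))
                               (finite_set_list_prefixes (snd p)))).
  intros [a l] [w ->]. exists l. split; [now exists w | reflexivity].
Qed.

Lemma chain_app v l1 l2 : chain v (l1 ++ l2) <-> chain v l1 /\ chain (last_v v l1) l2.
Proof. revert v. induction l1 as [|e l1 IH]; intros v; simpl; [tauto|]. rewrite IH. tauto. Qed.

Lemma last_v_app v l1 l2 : last_v v (l1 ++ l2) = last_v (last_v v l1) l2.
Proof. revert v. induction l1; simpl; auto. Qed.

Lemma ge_eq (x y : GE) : gu x = gu y -> gv x = gv y -> x = y.
Proof.
  destruct x as [u1 v1 pu1 pv1 e1], y as [u2 v2 pu2 pv2 e2]. simpl. intros -> ->.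
  f_equal; apply proof_irrelevance.
Qed.

Definition vertex (e : V) : GE := mkGE (e, []) (e, []) I I eq_refl.

Lemma mul_rel_functional x y z1 z2 : mul_rel x y z1 -> mul_rel x y z2 -> z1 = z2.
Proof.
  intros [(w1 & A1 & B1 & C1)|(w1 & A1 & B1 & C1)] [(w2 & A2 & B2 & C2)|(w2 & A2 & B2 & C2)];
    apply ge_eq.
  - rewrite A1 in A2. apply pcat_inj in A2. congruence.
  - congruence.
  - destruct (pcat_antisym _ _ _ _ A1 A2) as [-> ->]. now rewrite B1, B2, pcat_nil.
  - destruct (pcat_antisym _ _ _ _ A1 A2) as [-> ->]. now rewrite C1, C2, pcat_nil.
  - destruct (pcat_antisym _ _ _ _ A2 A1) as [-> ->]. now rewrite B1, B2, pcat_nil.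
  - destruct (pcat_antisym _ _ _ _ A2 A1) as [-> ->]. now rewrite C1, C2, pcat_nil.
  - congruence.
  - rewrite A1 in A2. apply pcat_inj in A2. congruence.
Qed.

Lemma gmul_of_mul_rel x y z : mul_rel x y z -> gmul (Some x) (Some y) = Some z.
Proof.
  intros H. unfold gmul. destruct excluded_middle_informative as [H'|H']; [|firstorder].
  f_equal. destruct (constructive_indefinite_description _ H') as [z' Hz']. simpl.
  eapply mul_rel_functional; eauto.
Qed.

Lemma gmul_zero_of_not_mul_rel x y :
  (forall z, ~ mul_rel x y z) -> gmul (Some x) (Some y) = None.
Proof.
  intros H. unfold gmul. destruct excluded_middle_informative as [[z Hz]|_]; [|reflexivity].
  exfalso. exact (H z Hz).
Qed.

Lemma gmul_Some_inv a b z : gmul a b = Some z ->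
  exists x y, a = Some x /\ b = Some y /\ mul_rel x y z.
Proof.
  destruct a as [x|], b as [y|]; simpl; try discriminate.
  destruct excluded_middle_informative as [H|]; [|discriminate].
  intros [= <-]. exists x, y. repeat split.
  apply (proj2_sig (constructive_indefinite_description _ H)).
Qed.

Lemma gmul_0r a : gmul a None = None.
Proof. destruct a; reflexivity. Qed.

Lemma mul_rel_prefix_gu x y z : mul_rel x y z -> prefix (gu x) (gu z).
Proof. intros [(w & _ & H & _)|(w & _ & H & _)]; [now exists w | rewrite H; apply prefix_refl]. Qed.

Lemma mul_rel_prefix_gv x y z : mul_rel x y z -> prefix (gv y) (gv z).
Proof. intros [(w & _ & _ & H)|(w & _ & _ & H)]; [rewrite H; apply prefix_refl | now exists w]. Qed.

Lemma vertex_factor e u : paths_into e u ->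
  exists a b, gmul (Some a) (Some b) = Some (vertex e) /\ gv a = u /\ gu b = u.
Proof.
  intros [Pu Ru].
  exists (mkGE (e, []) u I Pu (eq_sym Ru)), (mkGE u (e, []) Pu I Ru).
  split; [|auto]. apply gmul_of_mul_rel. left. exists []. simpl. now rewrite !pcat_nil.
Qed.

Lemma continuous_paths_into_finite :
  gmul_jointly_continuous s r -> forall e, finite_set (paths_into e).
Proof.
  intros Hc e.
  destruct (Hc None None (fun g => g <> Some (vertex e)))
    as (U & U' & oU & oU' & U0 & U'0 & HUU').
  - intros _. exists [Some (vertex e)]. intros g Hg. left. symmetry. exact (NNPP _ Hg).
  - discriminate.
  - eapply finite_set_sub.
    + apply finite_set_or;
        [exact (finite_set_image _ gv (finite_set_Some _ (oU U0)))
        |exact (finite_set_image _ gu (finite_set_Some _ (oU' U'0)))].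
    + intros u Hu. destruct (vertex_factor e u Hu) as (a & b & Hab & <- & Hb).
      destruct (classic (U (Some a))) as [Ua|nUa]; [|left; eauto].
      destruct (classic (U' (Some b))) as [Ub|nUb]; [|right; eauto].
      exfalso. exact (HUU' _ _ Ua Ub Hab).
Qed.

Lemma preimages_finite_continuous :
  (forall z : GE, finite_set (fun p : GIS * GIS => gmul (fst p) (snd p) = Some z)) ->
  gmul_jointly_continuous s r.
Proof.
  intros Hpre x y W oW Wxy. destruct (classic (W None)) as [W0|nW0].
  - assert (Hbad : finite_set (fun p : GIS * GIS => ~ W (gmul (fst p) (snd p)))).
    { apply (finite_set_sub _ _
        (finite_set_bigunion _ _ (finite_set_Some _ (oW W0)) (fun z _ => Hpre z))).
      intros p Hp. destruct (gmul (fst p) (snd p)) as [z|] eqn:E; [|contradiction].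
      exists z. auto. }
    exists (fun a => a = x \/ forall b, W (gmul a b)),
           (fun b => b = y \/ forall a, W (gmul a b)).
    repeat split; auto.
    + intros _. apply (finite_set_sub _ _ (finite_set_image _ fst Hbad)).
      intros a Ha. apply NNPP. intros Hall. apply Ha. right. intros b.
      apply NNPP. intros Hb. apply Hall. exists (a, b). auto.
    + intros _. apply (finite_set_sub _ _ (finite_set_image _ snd Hbad)).
      intros b Hb. apply NNPP. intros Hall. apply Hb. right. intros a.
      apply NNPP. intros Ha. apply Hall. exists (a, b). auto.
    + intros a b [->|Ha] [->|Hb]; auto.
  - exists (eq x), (eq y). repeat split.
    + intros ->. exfalso. exact (nW0 Wxy).
    + intros ->. rewrite gmul_0r in Wxy. exfalso. exact (nW0 Wxy).
    + intros a b <- <-. exact Wxy.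
Qed.

Lemma preimages_finite_paths_into_finite :
  (forall z : GE, finite_set (fun p : GIS * GIS => gmul (fst p) (snd p) = Some z)) ->
  forall e, finite_set (paths_into e).
Proof.
  intros Hpre e.
  assert (Hfin : finite_set (fun p : GE * GE =>
                               gmul (Some (fst p)) (Some (snd p)) = Some (vertex e))).
  { apply (finite_set_inj _ _ (fun p => (Some (fst p), Some (snd p))) (Hpre (vertex e))); auto.
    intros [a b] [a' b'] _ _ [= -> ->]. reflexivity. }
  apply (finite_set_sub _ _ (finite_set_image _ (fun p => gv (fst p)) Hfin)).
  intros u Hu. destruct (vertex_factor e u Hu) as (a & b & Hab & <- & _).
  exists (a, b). auto.
Qed.

Lemma green_L_Some x b : green_L (Some x) b -> exists y, b = Some y /\ gv y = gv x.
Proof.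
  assert (Hmult : forall x b, (Some x = b \/ exists t, Some x = gmul t b) ->
                  exists y, b = Some y /\ prefix (gv y) (gv x)).
  { intros x' b' [<-|[t Ht]]; [exists x'; split; [auto | apply prefix_refl]|].
    destruct (gmul_Some_inv _ _ _ (eq_sym Ht)) as (t' & y & _ & -> & M).
    exists y. split; [auto | exact (mul_rel_prefix_gv _ _ _ M)]. }
  intros [H1 H2]. destruct (Hmult x b H1) as (y & -> & Hyx).
  destruct (Hmult y (Some x) H2) as (x' & [= <-] & Hxy).
  exists y. split; [reflexivity | exact (prefix_antisym _ _ Hyx Hxy)].
Qed.

Lemma green_R_Some x b : green_R (Some x) b -> exists y, b = Some y /\ gu y = gu x.
Proof.
  assert (Hmult : forall x b, (Some x = b \/ exists t, Some x = gmul b t) ->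
                  exists y, b = Some y /\ prefix (gu y) (gu x)).
  { intros x' b' [<-|[t Ht]]; [exists x'; split; [auto | apply prefix_refl]|].
    destruct (gmul_Some_inv _ _ _ (eq_sym Ht)) as (y & t' & -> & _ & M).
    exists y. split; [auto | exact (mul_rel_prefix_gu _ _ _ M)]. }
  intros [H1 H2]. destruct (Hmult x b H1) as (y & -> & Hyx).
  destruct (Hmult y (Some x) H2) as (x' & [= <-] & Hxy).
  exists y. split; [reflexivity | exact (prefix_antisym _ _ Hyx Hxy)].
Qed.

Lemma green_D_Some x b :
  green_D (Some x) b -> exists y, b = Some y /\ prange (gu y) = prange (gv x).
Proof.
  intros (c & HL & HR). destruct (green_L_Some _ _ HL) as (z & -> & Hz).
  destruct (green_R_Some _ _ HR) as (y & -> & Hy).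
  exists y. split; [reflexivity|]. rewrite Hy, <- Hz. apply g_range.
Qed.

Section FinitePathsInto.
Hypothesis paths_into_finite : forall e, finite_set (paths_into e).

Lemma spans_finite (p : path) : finite_set (fun ab : path * path =>
  prefix (fst ab) p /\ paths_into (prange (fst ab)) (snd ab)).
Proof.
  apply (finite_set_sigma (fun q => prefix q p) (fun a => paths_into (prange a))).
  - apply prefixes_finite.
  - intros a _. apply paths_into_finite.
Qed.

Lemma gu_prefix_finite (p : path) : finite_set (fun x : GE => prefix (gu x) p).
Proof.
  apply (finite_set_inj _ _ (fun x => (gu x, gv x)) (spans_finite p)).
  - intros x Hx. repeat split; [exact Hx | apply gv_path | symmetry; apply g_range].
  - intros x y _ _ [= Hu Hv]. exact (ge_eq _ _ Hu Hv).
Qed.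

Lemma gv_prefix_finite (p : path) : finite_set (fun x : GE => prefix (gv x) p).
Proof.
  apply (finite_set_inj _ _ (fun x => (gv x, gu x)) (spans_finite p)).
  - intros x Hx. repeat split; [exact Hx | apply gu_path | apply g_range].
  - intros x y _ _ [= Hv Hu]. exact (ge_eq _ _ Hu Hv).
Qed.

Lemma mul_rel_preimage_finite z : finite_set (fun p : GE * GE => mul_rel (fst p) (snd p) z).
Proof.
  apply finite_set_or.
  - apply (finite_set_inj _ _ fst (gu_prefix_finite (gu z))).
    + intros [x y] (w & _ & Hz & _). now exists w.
    + intros [x y1] [x' y2] (w1 & A1 & B1 & C1) (w2 & A2 & B2 & C2). simpl in *. intros <-.
      rewrite B1 in B2. apply pcat_inj in B2. subst w2.
      f_equal. apply ge_eq; congruence.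
  - apply (finite_set_inj _ _ snd (gv_prefix_finite (gv z))).
    + intros [x y] (w & _ & _ & Hz). now exists w.
    + intros [x1 y] [x2 y'] (w1 & A1 & B1 & C1) (w2 & A2 & B2 & C2). simpl in *. intros <-.
      rewrite C1 in C2. apply pcat_inj in C2. subst w2.
      f_equal. apply ge_eq; congruence.
Qed.

Lemma preimages_finite z :
  finite_set (fun p : GIS * GIS => gmul (fst p) (snd p) = Some z).
Proof.
  apply (finite_set_sub _ _ (finite_set_image _ (fun p => (Some (fst p), Some (snd p)))
                               (mul_rel_preimage_finite z))).
  intros [a b] H. simpl in H. destruct (gmul_Some_inv _ _ _ H) as (x & y & -> & -> & M).
  exists (x, y). auto.
Qed.

Lemma ranged_elements_finite e : finite_set (fun x : GE => prange (gu x) = e).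
Proof.
  apply (finite_set_inj _ _ (fun x => (gu x, gv x))
           (finite_set_sigma _ (fun _ => paths_into e) (paths_into_finite e)
              (fun _ _ => paths_into_finite e))).
  - intros x Hx. simpl. repeat split; try apply gu_path; try apply gv_path; auto.
    rewrite <- g_range. exact Hx.
  - intros x y _ _ [= Hu Hv]. exact (ge_eq _ _ Hu Hv).
Qed.

Lemma D_classes_finite x : finite_set (green_D x).
Proof.
  destruct x as [x|].
  - apply (finite_set_sub _ _ (finite_set_image _ Some (ranged_elements_finite (prange (gv x))))).
    intros b Hb. destruct (green_D_Some _ _ Hb) as (y & -> & Hy). eauto.
  - exists [None]. intros b (c & [_ H1] & [_ H2]).
    assert (c = None) as -> by (destruct H1 as [->|[t ->]]; [reflexivity | apply gmul_0r]).
    destruct H2 as [->|[t ->]]; now left.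
Qed.

End FinitePathsInto.

Lemma D_class_infinite (g : nat -> GIS) :
  Injective g -> (forall n, green_L (g 0) (g n)) -> ~ finite_set (green_D (g 0)).
Proof.
  intros Hinj HL Hfin. apply (finite_set_no_injection _ g Hfin); [|exact Hinj].
  intros n. exists (g n). split; [apply HL | split; now left].
Qed.

Lemma D_classes_finite_no_embeddings : (forall x, finite_set (green_D x)) ->
  ~ embeds bicyclic_mul gmul /\ ~ embeds Momega_mul gmul.
Proof.
  intros HD. split; intros (f & Hf & Hmul).
  - apply (D_class_infinite (fun n => f (n, 0))); [| |apply HD].
    + intros n m E. apply Hf in E. congruence.
    + intros n. split; right.
      * exists (f (0, n)). rewrite <- Hmul. unfold bicyclic_mul. simpl. f_equal. f_equal; lia.
      * exists (f (n, 0)). rewrite <- Hmul. unfold bicyclic_mul. simpl. f_equal. f_equal; lia.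
  - apply (D_class_infinite (fun n => f (Some (n, 0)))); [| |apply HD].
    + intros n m E. apply Hf in E. congruence.
    + intros n. split; right.
      * exists (f (Some (0, n))). rewrite <- Hmul. simpl. now rewrite Nat.eqb_refl.
      * exists (f (Some (n, 0))). now rewrite <- Hmul.
Qed.

Lemma chain_list_pow v c : chain v c -> last_v v c = v ->
  forall n, chain v (list_pow c n) /\ last_v v (list_pow c n) = v.
Proof.
  intros Hc Hl n. induction n as [|n [IH1 IH2]]; simpl; [auto|].
  rewrite chain_app, last_v_app, Hl. auto.
Qed.

Lemma cycle_embeds_bicyclic v c :
  chain v c -> last_v v c = v -> c <> [] -> embeds bicyclic_mul gmul.
Proof.
  intros Hc Hl Hne. pose proof (chain_list_pow v c Hc Hl) as CP.
  exists (fun ab => Some (mkGE (v, list_pow c (fst ab)) (v, list_pow c (snd ab))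
                        (proj1 (CP (fst ab))) (proj1 (CP (snd ab)))
                        (eq_trans (proj2 (CP (fst ab))) (eq_sym (proj2 (CP (snd ab))))))).
  split.
  - intros [a b] [a' b'] [= Ha Hb]. apply (list_pow_inj c Hne) in Ha, Hb. congruence.
  - intros [a b] [a' b']. symmetry. apply gmul_of_mul_rel. unfold bicyclic_mul. simpl.
    destruct (le_lt_dec b a') as [H|H]; [left; exists (list_pow c (a' - b))
                                         |right; exists (list_pow c (b - a'))];
      unfold pcat; simpl; rewrite <- !list_pow_add; repeat split; do 2 f_equal; lia.
Qed.

Definition acyclic : Prop := forall v c, chain v c -> last_v v c = v -> c = [].

Lemma acyclic_prefix_eq e p q :
  acyclic -> paths_into e p -> paths_into e q -> prefix p q -> p = q.
Proof.
  intros Hac [_ Rp] [Pq Rq] [w ->].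
  assert (w = []) as ->.
  { unfold is_path, prange, pcat in *. simpl in *.
    rewrite chain_app in Pq. rewrite last_v_app in Rq.
    apply (Hac _ w (proj2 Pq)). congruence. }
  symmetry. apply pcat_nil.
Qed.

Lemma acyclic_embeds_Momega e :
  acyclic -> ~ finite_set (paths_into e) -> embeds Momega_mul gmul.
Proof.
  intros Hac Hinf. destruct (infinite_set_injection _ Hinf) as (g & Hg & Hinj).
  exists (fun o => match o with
    | None => None
    | Some ij => Some (mkGE (g (fst ij)) (g (snd ij)) (proj1 (Hg _)) (proj1 (Hg _))
                   (eq_trans (proj2 (Hg (fst ij))) (eq_sym (proj2 (Hg (snd ij))))))
    end).
  split.
  - intros [[i j]|] [[k l]|] E; try discriminate; try reflexivity.
    injection E as Ei Ej. apply Hinj in Ei, Ej. now subst.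
  - intros [[i j]|] [[k l]|]; simpl; try reflexivity; try (symmetry; apply gmul_0r).
    destruct (Nat.eqb_spec j k) as [<-|Hjk]; symmetry.
    + apply gmul_of_mul_rel. left. exists []. simpl. now rewrite !pcat_nil.
    + apply gmul_zero_of_not_mul_rel. intros z [(w & A & _)|(w & A & _)]; simpl in A;
        apply Hjk, Hinj.
      * exact (acyclic_prefix_eq e _ _ Hac (Hg j) (Hg k) (ex_intro _ w A)).
      * symmetry. exact (acyclic_prefix_eq e _ _ Hac (Hg k) (Hg j) (ex_intro _ w A)).
Qed.

Lemma no_embedding_paths_into_finite :
  ~ embeds bicyclic_mul gmul /\ ~ embeds Momega_mul gmul ->
  forall e, finite_set (paths_into e).
Proof.
  intros [Hbic Hmom] e. apply NNPP. intros Hinf.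
  destruct (classic acyclic) as [Hac|Hcyc].
  - exact (Hmom (acyclic_embeds_Momega e Hac Hinf)).
  - apply Hcyc. intros v c Hc Hl. apply NNPP. intros Hne.
    exact (Hbic (cycle_embeds_bicyclic v c Hc Hl Hne)).
Qed.

End GraphInverseSemigroup.

Theorem theorem2p4 (V Ed : Type) (s r : Ed -> V) :
  let G := GIS s r in
  let mul := gmul s r in
  let c1 := gmul_jointly_continuous s r in
  let c2 := forall z : GE s r,
      finite_set (fun p : G * G => mul (fst p) (snd p) = Some z) in
  let c3 := forall e : V,
      finite_set (fun u : path => is_path s r u /\ prange r u = e) in
  let c4 := ~ embeds bicyclic_mul mul /\ ~ embeds Momega_mul mul in
  let c5 := forall x : G, finite_set (green_D s r x) in
  (c1 <-> c2) /\ (c2 <-> c3) /\ (c3 <-> c4) /\ (c4 <-> c5).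
Proof.
  cbv zeta. split; [|split; [|split]]; split.
  - intros Hc. exact (preimages_finite s r (continuous_paths_into_finite s r Hc)).
  - exact (preimages_finite_continuous s r).
  - exact (preimages_finite_paths_into_finite s r).
  - exact (preimages_finite s r).
  - intros H. exact (D_classes_finite_no_embeddings s r (D_classes_finite s r H)).
  - exact (no_embedding_paths_into_finite s r).
  - intros H. exact (D_classes_finite s r (no_embedding_paths_into_finite s r H)).
  - exact (D_classes_finite_no_embeddings s r).
Qed.
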